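(* Let $T\in\mathbb{T}$ have a positive weight on each edge, with adjacency matrix $A$. Then the smallest positive eigenvalue $\tau(T)$ of $A$ is simple, and there exists an eigenvector of $A$ corresponding to $\tau(T)$ all of whose entries are nonzero.
   Context: $\mathbb{T}$ is the class of simple undirected weighted trees $T$ such that (i) $T$ has at least one non-pendant vertex, and (ii) every non-pendant vertex of $T$ is adjacent to at least one pendant vertex (a vertex of degree one). The adjacency matrix $A$ has $(i,j)$ entry equal to the weight of edge $v_iv_j$, or $0$ if no edge. *)

From mathcomp Require Import all_boot all_order all_algebra.
Set Implicit Arguments. Unset Strict Implicit. Unset Printing Implicit Defensive.
Import Order.TTheory GRing.Theory Num.Theory.
Local Open Scope ring_scope.

Definition simple_graph n (e : rel 'I_n) : Prop :=
  symmetric e /\ irreflexive e.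

Definition deg n (e : rel 'I_n) (v : 'I_n) : nat := #|[set u | e v u]|.

Definition pendant n (e : rel 'I_n) (v : 'I_n) : bool := deg e v == 1%N.

Definition connected_graph n (e : rel 'I_n) : Prop :=
  forall u v : 'I_n, connect e u v.

Definition acyclic_graph n (e : rel 'I_n) : Prop :=
  forall c : seq 'I_n, (3 <= size c)%N -> uniq c -> ~~ cycle e c.

Definition is_tree n (e : rel 'I_n) : Prop :=
  [/\ simple_graph e, connected_graph e & acyclic_graph e].

Definition in_class_T n (e : rel 'I_n) : Prop :=
  [/\ is_tree e,
      (exists v : 'I_n, ~~ pendant e v) &
      (forall v : 'I_n, ~~ pendant e v -> exists u : 'I_n, e v u && pendant e u)].

Definition wadj (R : nzRingType) n (e : rel 'I_n) (w : 'I_n -> 'I_n -> R)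
  : 'M[R]_n := \matrix_(i, j) (if e i j then w i j else 0).

(* The weighted adjacency matrix A is real symmetric, so the space splits into
   eigenspaces and the form of A - t is nonnegative on the sum of the eigenspaces
   with eigenvalue at least t.  Let tau be the smallest positive eigenvalue and W
   the space of vectors satisfying the eigen-equation for tau at every pendant
   vertex.  The form of A - tau is nonnegative on W: otherwise it would be negative
   definite on a space of dimension #pendant + 1 (vectors whose internal part is
   proportional to a bad vector of W), while A is positive definite on a space of
   dimension #internal (each pendant vertex tied to its neighbour with a large
   factor), and no eigenvalue lies in (0, tau).  If an eigenvector x for tau
   vanishes at u, then for a neighbour v the restriction of x to the branch at u
   through v is an isotropic vector of W, hence orthogonal to the vector of W
   supported on u and its pendant neighbours; that product is w_uv x_v.  So the
   eigenvectors for tau are nowhere zero, the eigenspace is a line, and for a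
   symmetric matrix the multiplicity of tau as a root of the characteristic
   polynomial is the dimension of its eigenspace. *)

From mathcomp Require Import all_boot all_order all_algebra.
From mathcomp Require Import complex.
From mathcomp Require Import ring lra zify.
Set Implicit Arguments. Unset Strict Implicit. Unset Printing Implicit Defensive.
Import Order.TTheory GRing.Theory Num.Theory.
Local Open Scope ring_scope.

Local Notation "''[' u , v ]_ M" := (form idfun M u v) : ring_scope.
Local Notation "''[' u , v ]" := (form idfun 1%:M u v) : ring_scope.

Lemma mxrank_diag (F : fieldType) n (d : 'rV[F]_n) :
  \rank (diag_mx d) = #|[pred i | d 0 i != 0]|.
Proof.
rewrite -sum1_card big_mkcond /=.
elim: n d => [|n IHn] d; first by rewrite big_ord0 thinmx0 mxrank0.
pose d' : 'rV_(1 + n) := d.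
have -> : \rank (diag_mx d) =
    \rank (block_mx (diag_mx (lsubmx d')) 0 0 (diag_mx (rsubmx d'))).
  by rewrite -diag_mx_row hsubmxK.
have -> : diag_mx (lsubmx d') = (d 0 0)%:M.
  by apply/matrixP => i j; rewrite !ord1 !mxE eqxx; congr (d _ _ *+ _); apply/val_inj.
have d00_eq0 : ((d 0 0)%:M == 0 :> 'M_1) = (d 0 0 == 0).
  by apply/eqP/eqP => [/matrixP/(_ 0 0)|->]; rewrite ?raddf0 // !mxE.
rewrite rank_diag_block_mx IHn big_ord_recl rank_rV d00_eq0 inE; congr (_ + _)%N.
apply: eq_bigr => i _; rewrite !inE mxE.
by rewrite (_ : rshift 1 i = lift ord0 i) //; apply/val_inj.
Qed.

Lemma char_poly_conj (R : comUnitRingType) n (P M : 'M[R]_n) : P \in unitmx ->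
  char_poly (invmx P *m M *m P) = char_poly M.
Proof.
move=> Pu; rewrite /char_poly.
have -> : char_poly_mx (invmx P *m M *m P) =
    map_mx polyC (invmx P) *m char_poly_mx M *m map_mx polyC P.
  rewrite /char_poly_mx !map_mxM mulmxBr mulmxBl; congr (_ - _).
  by rewrite scalar_mxC -mulmxA -map_mxM mulVmx // map_mx1 mulmx1.
by rewrite !det_mulmx mulrC mulrA -det_mulmx -map_mxM mulmxV // map_mx1 det1 mul1r.
Qed.

Lemma mxrank_conj (F : fieldType) n (P M : 'M[F]_n) : P \in unitmx ->
  \rank (invmx P *m M *m P) = \rank M.
Proof.
by move=> Pu; rewrite mxrankMfree ?row_free_unit // eqmxMfull // row_full_unit unitmx_inv.
Qed.

Lemma mxrank_disjoint_le (F : fieldType) m1 m2 n (U : 'M[F]_(m1, n)) (V : 'M_(m2, n)) :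
  (forall z : 'rV_n, (z <= U)%MS -> (z <= V)%MS -> z = 0) -> (\rank U + \rank V <= n)%N.
Proof.
move=> UV0; have /eqP capUV : (U :&: V)%MS == 0.
  by apply/rowV0P => z; rewrite sub_capmx => /andP [zU zV]; apply: UV0.
by rewrite -mxrank_sum_cap capUV mxrank0 addn0 rank_leq_col.
Qed.

Lemma mxrank_kermx_supp (F : fieldType) m k (M : 'M[F]_(m, k)) (S : {set 'I_k}) :
  (forall i j, j \notin S -> M i j = 0) -> (m - #|S| <= \rank (kermx M))%N.
Proof.
move=> M_supp; rewrite mxrank_ker leq_sub2l //.
have -> : M = M *m diag_mx (\row_j (j \in S)%:R).
  apply/matrixP => i j; rewrite mul_mx_diag !mxE.
  by case: (boolP (j \in S)) => [_|/M_supp ->]; rewrite ?mulr1 ?mulr0.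
apply: leq_trans (mxrankM_maxr _ _) _; rewrite mxrank_diag subset_leq_card //.
by apply/subsetP => j; rewrite !inE mxE; case: (j \in S); rewrite ?eqxx.
Qed.

Lemma mxrank_le1_coord (F : fieldType) m n (W : 'M[F]_(m, n)) i0 :
  (forall z : 'rV_n, (z <= W)%MS -> z 0 i0 = 0 -> z = 0) -> (\rank W <= 1)%N.
Proof.
move=> W_coord; pose B : 'cV[F]_n := delta_mx i0 0.
have /eqP capWB : (W :&: kermx B)%MS == 0.
  apply/rowV0P => z; rewrite sub_capmx => /andP [zW /sub_kermxP zB]; apply: W_coord => //.
  by have := congr1 (fun N : 'M_1 => N 0 0) zB; rewrite /B -colE !mxE.
by rewrite -(mxrank_mul_ker W B) capWB mxrank0 addn0 rank_leq_col.
Qed.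

Lemma mulmx_subr_scalar_entry (R : comNzRingType) n (M : 'M[R]_n) (z : 'rV_n) c j :
  (z *m (M - c%:M)) 0 j = (z *m M) 0 j - c * z 0 j.
Proof. by rewrite mulmxBr mul_mx_scalar !mxE. Qed.

Lemma sum_mulr_delta (S : nzRingType) n (F : 'I_n -> S) k :
  \sum_i F i * (i == k)%:R = F k.
Proof. by rewrite (bigD1 k) //= eqxx mulr1 big1 ?addr0 // => i /negbTE ->; rewrite mulr0. Qed.

Section Forms.
Variables (R : realFieldType) (n : nat).
Implicit Types (M : 'M[R]_n) (u v w : 'rV[R]_n).

Lemma formE M u v : '[u, v]_M = \sum_j (u *m M) 0 j * v 0 j.
Proof. by rewrite /form map_mx_id // mxE; apply: eq_bigr => j _; rewrite [v^T _ _]mxE. Qed.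

Lemma formE2 M u v : '[u, v]_M = \sum_i \sum_j u 0 i * M i j * v 0 j.
Proof.
rewrite formE exchange_big /=; apply: eq_bigr => j _.
by rewrite mxE mulr_suml.
Qed.

Lemma form_sym M u v : M^T = M -> '[u, v]_M = '[v, u]_M.
Proof.
move=> symM; rewrite /form !map_mx_id //.
have -> : (u *m M *m v^T) 0 0 = (u *m M *m v^T)^T 0 0 by rewrite [RHS]mxE.
by rewrite !trmx_mul trmxK symM mulmxA.
Qed.

Lemma form_subr_scalar M c u v : '[u, v]_(M - c%:M) = '[u, v]_M - c * '[u, v].
Proof. by rewrite /form mulmxBr mulmxBl mul_mx_scalar -scalemxAl !mxE mulmx1. Qed.

Lemma form_eigenl M a u v : u *m M = a *: u -> '[u, v]_M = a * '[u, v].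
Proof. by move=> uM; rewrite /form uM -scalemxAl mulmx1 mxE. Qed.

Lemma form_suml M I (r : seq I) (P : pred I) (F : I -> 'rV[R]_n) w :
  '[\sum_(i <- r | P i) F i, w]_M = \sum_(i <- r | P i) '[F i, w]_M.
Proof. exact: (big_morph _ (fun u v => formDl _ _ u v w) (form0l _ _ w)). Qed.

Lemma form_sumr M I (r : seq I) (P : pred I) (F : I -> 'rV[R]_n) w :
  '[w, \sum_(i <- r | P i) F i]_M = \sum_(i <- r | P i) '[w, F i]_M.
Proof. exact: (big_morph _ (formDr _ _ w) (form0r _ _ w)). Qed.

Lemma form1_ge0 u : 0 <= '[u, u].
Proof. by rewrite formE sumr_ge0 // => j _; rewrite mulmx1 -expr2 sqr_ge0. Qed.

Lemma form1_gt0 u : u != 0 -> 0 < '[u, u].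
Proof.
move=> u_neq0; rewrite lt_def form1_ge0 andbT; apply: contra u_neq0.
rewrite formE psumr_eq0 => [/allP u0|j _]; last by rewrite mulmx1 -expr2 sqr_ge0.
apply/eqP/matrixP => i j; rewrite ord1 mxE.
by have /= := u0 j (mem_index_enum j); rewrite mulmx1 mulf_eq0 orbb => /eqP.
Qed.

Lemma form1_eigenspace_orth M a b u v : M^T = M -> a != b ->
  (u <= eigenspace M a)%MS -> (v <= eigenspace M b)%MS -> '[u, v] = 0.
Proof.
move=> symM ab /eigenspaceP uM /eigenspaceP vM.
have := form_eigenl v uM; rewrite form_sym // (form_eigenl u vM) form_sym ?trmx1 //.
by move/eqP; rewrite -subr_eq0 -mulrBl mulf_eq0 subr_eq0 eq_sym (negbTE ab) => /eqP.
Qed.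

Lemma form_psd_isotropic M (W : 'rV[R]_n -> Prop) u v : M^T = M ->
  (forall a u v, W u -> W v -> W (a *: u + v)) ->
  (forall z, W z -> 0 <= '[z, z]_M) ->
  W u -> W v -> '[u, u]_M = 0 -> '[u, v]_M = 0.
Proof.
move=> symM W_lin psd Wu Wv uu0; apply/eqP; apply: contraT => uv_neq0.
(* The form at [a *: u + v] is [2 a '[u, v]_M + '[v, v]_M], which is [-1] for: *)
pose a := - ('[v, v]_M + 1) / (2 * '[u, v]_M).
have := psd _ (W_lin a u v Wu Wv).
rewrite formDl !formDr !formZl !formZr uu0 (form_sym v u symM) /= !mulr0 add0r.
have -> : a * '[u, v]_M + (a * '[u, v]_M + '[v, v]_M) = -1.
  by rewrite /a; field.
by rewrite ler0N1.
Qed.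

End Forms.

Section RealSymmetric.
Variables (R : rcfType) (n : nat) (A : 'M[R]_n).
Hypothesis symA : A^T = A.

Lemma symmetric_spectrum : exists d : 'I_n -> R,
  char_poly A = \prod_i ('X - (d i)%:P) /\
  forall c, \rank (eigenspace A c) = #|[pred i | d i == c]|.
Proof.
pose f := real_complex R; pose AC := map_mx f A.
have AC_herm : AC \is hermsymmx.
  apply: realsym_hermsym; last first.
    by apply/mxOverP => i j; rewrite mxE; apply/complex_realP; exists (A i j).
  by apply/is_hermitianmxP; rewrite expr0 scale1r map_mx_id // /AC map_trmx symA.
have /orthomx_spectralP AC_diag := hermitian_normalmx AC_herm.
have /mxOverP D_real := hermitian_spectral_diag_real AC_herm.
set P := spectralmx AC in AC_diag; set D := spectral_diag AC in AC_diag D_real.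
have P_unit : P \in unitmx by apply: spectral_unit.
exists (fun i => complex.Re (D 0 i)).
have D_re i : D 0 i = f (complex.Re (D 0 i)) by rewrite /f RRe_real ?D_real.
split.
  apply: (@map_poly_inj _ _ f); rewrite map_char_poly -/AC AC_diag char_poly_conj //.
  rewrite char_poly_trig ?diag_mx_is_trig // rmorph_prod; apply: eq_bigr => i _.
  by rewrite mxE eqxx mulr1n D_re rmorphB /= map_polyX map_polyC.
move=> c; rewrite mxrank_ker -(mxrank_map f) map_mxB map_scalar_mx -/AC AC_diag.
have -> : (f c)%:M = invmx P *m (f c)%:M *m P :> 'M_n.
  by rewrite scalar_mxC -mulmxA mulVmx // mulmx1.
rewrite -mulmxBl -mulmxBr mxrank_conj // -diag_const_mx -linearB /=.
set Dc := [pred i | complex.Re (D 0 i) == c].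
rewrite mxrank_diag (@eq_card _ _ [predC Dc]) => [|i]; last first.
  by rewrite !inE !mxE D_re subr_eq0 (inj_eq (@complexI R)).
by rewrite -{1}(card_ord n) -(cardC Dc) addnK.
Qed.

Lemma symmetric_mup_char_poly c : mup c (char_poly A) = \rank (eigenspace A c).
Proof.
have [d [-> rankE]] := symmetric_spectrum.
rewrite -(big_map d predT (fun r => 'X - r%:P)) mu_prod_XsubC rankE count_map.
by rewrite -sum1_count -sum1_card; apply: eq_bigl => i; rewrite !inE eq_sym.
Qed.

Lemma symmetric_eigenspaces_full : exists k (a_ : 'I_k -> R),
  injective a_ /\ (\sum_j eigenspace A (a_ j) :=: 1%:M)%MS.
Proof.
have [d [_ rankE]] := symmetric_spectrum.
set s := [seq d i | i <- index_enum 'I_n]; set rs := undup s.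
have inj_rs : injective (fun j : 'I_(size rs) => rs`_j).
  by move=> j k /eqP; rewrite nth_uniq ?undup_uniq // => /eqP/val_inj.
exists (size rs), (fun j => rs`_j); split => //.
apply/eqmxP; rewrite submx1 sub1mx /row_full.
have /mxdirectP -> := mxdirect_sum_eigenspace A (P := predT) (in2W inj_rs).
rewrite /= -(big_mkord predT (fun j => \rank (eigenspace A rs`_j))).
rewrite -(big_nth 0 predT (fun r => \rank (eigenspace A r))).
have rank_count r : \rank (eigenspace A r) = iterop (count_mem r s) addn 1 0.
  rewrite rankE Monoid.iteropE iter_addn mul1n addn0 count_map -sum1_count -sum1_card.
  by apply: eq_bigl => i; rewrite !inE eq_sym.
rewrite (eq_bigr _ (fun r _ => rank_count r)) big_undup_iterop_count big_map.
by rewrite sum1_card card_ord.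
Qed.

Lemma symmetric_min_pos_eigenvalue : (exists2 c, 0 < c & eigenvalue A c) ->
  exists tau, [/\ 0 < tau, eigenvalue A tau &
                  forall mu, 0 < mu -> eigenvalue A mu -> tau <= mu].
Proof.
have [d [_ rankE]] := symmetric_spectrum.
have eigE c : eigenvalue A c = [exists i, d i == c].
  by rewrite /eigenvalue -mxrank_eq0 rankE -lt0n.
case=> c c_gt0; rewrite eigE => /existsP [i0 /eqP d_i0].
case: (@arg_minP _ _ _ i0 [pred i | 0 < d i] d) => [|i i_gt0 i_min].
  by rewrite inE d_i0.
exists (d i); split => //; first by rewrite eigE; apply/existsP; exists i.
by move=> mu mu_gt0; rewrite eigE => /existsP [j /eqP dj]; rewrite -dj i_min ?inE ?dj.
Qed.

Lemma form_sumsmx_eigenspace k (a_ : 'I_k -> R) (P : pred 'I_k) t z :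
  injective a_ -> (z <= \sum_(j | P j) eigenspace A (a_ j))%MS ->
  exists2 z_ : 'I_k -> 'rV_n, (forall j, (z_ j <= eigenspace A (a_ j))%MS)
    & '[z, z]_(A - t%:M) = \sum_(j | P j) (a_ j - t) * '[z_ j, z_ j].
Proof.
move=> inj_a /sub_sumsmxP [u_ ->].
exists (fun j => u_ j *m eigenspace A (a_ j)) => [j|]; first exact: submxMl.
rewrite form_suml; apply: eq_bigr => j Pj.
have /eigenspaceP zjA := submxMl (u_ j) (eigenspace A (a_ j)).
rewrite form_sumr (bigD1 j) //= big1 ?addr0 => [|l /andP [_ lj]].
  by rewrite form_subr_scalar (form_eigenl _ zjA) mulrBl.
have a_neq : a_ j != a_ l by rewrite (inj_eq inj_a) eq_sym.
rewrite form_subr_scalar (form_eigenl _ zjA).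
by rewrite (form1_eigenspace_orth symA a_neq (submxMl _ _) (submxMl _ _)) !mulr0 subrr.
Qed.

Lemma form_sumsmx_eigenspace_ge0 k (a_ : 'I_k -> R) (P : pred 'I_k) t z :
  injective a_ -> (forall j, P j -> eigenvalue A (a_ j) -> t <= a_ j) ->
  (z <= \sum_(j | P j) eigenspace A (a_ j))%MS -> 0 <= '[z, z]_(A - t%:M).
Proof.
move=> inj_a sign /(form_sumsmx_eigenspace t inj_a) [z_ z_eig ->].
apply: sumr_ge0 => j Pj; have [->|zj_neq0] := eqVneq (z_ j) 0; first by rewrite form0l mulr0.
rewrite mulr_ge0 ?form1_ge0 // subr_ge0 sign //.
by apply/eigenvalueP; exists (z_ j) => //; apply/eigenspaceP.
Qed.

Lemma form_sumsmx_eigenspace_le0 k (a_ : 'I_k -> R) (P : pred 'I_k) t z :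
  injective a_ -> (forall j, P j -> eigenvalue A (a_ j) -> a_ j <= t) ->
  (z <= \sum_(j | P j) eigenspace A (a_ j))%MS -> '[z, z]_(A - t%:M) <= 0.
Proof.
move=> inj_a sign /(form_sumsmx_eigenspace t inj_a) [z_ z_eig ->].
apply: sumr_le0 => j Pj; have [->|zj_neq0] := eqVneq (z_ j) 0; first by rewrite form0l mulr0.
rewrite mulr_le0_ge0 ?form1_ge0 // subr_le0 sign //.
by apply/eigenvalueP; exists (z_ j) => //; apply/eigenspaceP.
Qed.

Lemma symmetric_pos_eigenvalue z : 0 < '[z, z]_A -> exists2 c, 0 < c & eigenvalue A c.
Proof.
move=> z_pos; have [k [a_ [inj_a full]]] := symmetric_eigenspaces_full.
have [/existsP [j /andP [aj_gt0 aj_eig]]|no_pos] :=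
  boolP [exists j, (0 < a_ j) && eigenvalue A (a_ j)]; first by exists (a_ j).
have : '[z, z]_(A - 0%:M) <= 0.
  apply: (form_sumsmx_eigenspace_le0 (P := predT) inj_a); last by rewrite full submx1.
  move=> j _ aj_eig; rewrite leNgt; apply: contraNN no_pos => aj_gt0.
  by apply/existsP; exists j; rewrite aj_gt0.
by rewrite form_subr_scalar mul0r subr0 leNgt z_pos.
Qed.

Lemma symmetric_rank_definite_le tau m1 m2 (U : 'M_(m1, n)) (V : 'M_(m2, n)) :
  (forall c, 0 < c -> eigenvalue A c -> tau <= c) ->
  (forall z, (z <= U)%MS -> z != 0 -> '[z, z]_(A - tau%:M) < 0) ->
  (forall z, (z <= V)%MS -> z != 0 -> 0 < '[z, z]_A) ->
  (\rank U + \rank V <= n)%N.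
Proof.
move=> gap U_neg V_pos; have [k [a_ [inj_a full]]] := symmetric_eigenspaces_full.
pose Elow := (\sum_(j | (a_ j < tau)%R) eigenspace A (a_ j))%MS.
pose Ehigh := (\sum_(j | ~~ (a_ j < tau)%R) eigenspace A (a_ j))%MS.
have rank_split : (n <= \rank Elow + \rank Ehigh)%N.
  rewrite -{1}(mxrank1 R n) -full (bigID (fun j => (a_ j < tau)%R)) /=.
  exact: (mxrank_adds_leqif _ _).1.
have UEhigh : (\rank U + \rank Ehigh <= n)%N.
  apply: mxrank_disjoint_le => z zU zE; apply/eqP; apply: contraT => z_neq0.
  have := U_neg z zU z_neq0; rewrite ltNge (form_sumsmx_eigenspace_ge0 inj_a _ zE) //.
  by move=> j; rewrite -leNgt => tau_le _.
have VElow : (\rank V + \rank Elow <= n)%N.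
  apply: mxrank_disjoint_le => z zV zE; apply/eqP; apply: contraT => z_neq0.
  have := V_pos z zV z_neq0; rewrite ltNge.
  have -> : '[z, z]_A = '[z, z]_(A - 0%:M) by rewrite form_subr_scalar mul0r subr0.
  rewrite (form_sumsmx_eigenspace_le0 inj_a _ zE) // => j aj_lt aj_eig.
  by rewrite leNgt; apply: contraTN aj_lt => /gap /(_ aj_eig); rewrite -leNgt.
lia.
Qed.

End RealSymmetric.

Section PendantVertices.
Variables (n : nat) (e : rel 'I_n).

Definition pendant_nb (p : 'I_n) : 'I_n := odflt p [pick j | e p j].

Lemma pendant_adjE p j : pendant e p -> e p j = (j == pendant_nb p).
Proof.
rewrite /pendant /deg => /cards1P [x Ex].
have adjE k : e p k = (k == x) by rewrite -in_set1 -Ex inE.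
suff -> : pendant_nb p = x by apply: adjE.
rewrite /pendant_nb; case: pickP => [y|/(_ x)] /=; first by rewrite adjE => /eqP.
by rewrite adjE eqxx.
Qed.

Lemma pendant_adj_nb p : pendant e p -> e p (pendant_nb p).
Proof. by move=> pp; rewrite pendant_adjE ?eqxx. Qed.

Hypothesis e_sym : symmetric e.

Lemma adj_pendant_nb p q : pendant e p -> e q p -> q = pendant_nb p.
Proof. by move=> pp; rewrite e_sym pendant_adjE // => /eqP. Qed.

Lemma pendant_nb_internal p : connected_graph e -> (exists v, ~~ pendant e v) ->
  pendant e p -> ~~ pendant e (pendant_nb p).
Proof.
move=> e_conn [v v_int] pp; apply/negP => pq; set q := pendant_nb p in pq.
have qq : pendant_nb q = p by apply/esym/adj_pendant_nb => //; apply: pendant_adj_nb.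
have closed_pq : closed e [:: p; q].
  apply: (intro_closed (sym_connect_sym e_sym)) => x y xy.
  rewrite !inE => /orP [] /eqP xE; move: xy; rewrite xE.
    by rewrite pendant_adjE // => ->; rewrite orbT.
  by rewrite pendant_adjE // qq => ->.
have := closed_connect closed_pq (e_conn p v); rewrite !inE eqxx /=.
by move/esym/orP => [] /eqP vE; move: v_int; rewrite vE ?pp ?pq.
Qed.

Lemma internal_pendant_nb q : (exists p, e q p && pendant e p) ->
  exists2 p, pendant e p & pendant_nb p = q.
Proof. by case=> p /andP [qp pp]; exists p => //; apply/esym/adj_pendant_nb. Qed.

End PendantVertices.

Section Avoiding.
Variables (n : nat) (e : rel 'I_n).
Hypotheses (e_irr : irreflexive e) (e_acyc : acyclic_graph e).

Definition avoiding (q : 'I_n) := [rel a b | [&& e a b, a != q & b != q]].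

Lemma path_avoiding q a s : path (avoiding q) a s -> all (fun b => b != q) s.
Proof. by elim: s a => //= b s IHs a /andP [/and3P [_ _ ->] /IHs]. Qed.

Lemma connect_avoiding_neq q a b : connect (avoiding q) a b -> a != q -> b != q.
Proof.
move=> /connectP [s /path_avoiding s_q ->]; case/lastP: s s_q => // s c.
by rewrite all_rcons last_rcons => /andP [].
Qed.

Lemma branch_unique q r b : e q r -> connect (avoiding q) r b -> e b q -> b = r.
Proof.
move=> qr /connectP [s0 s0_path ->]; case: (shortenP s0_path) => s s_path s_uniq _ bq.
apply/eqP; apply: contraT => b_neq_r.
have r_neq_q : r != q by apply: contraTneq qr => ->; rewrite e_irr.
case: s => [|y s] in s_path s_uniq bq b_neq_r *; first by rewrite eqxx in b_neq_r.
have q_notin : q \notin r :: y :: s.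
  rewrite inE negb_or eq_sym r_neq_q /=; apply/negP => /(allP (path_avoiding s_path)).
  by rewrite eqxx.
have cyc : cycle e [:: q, r, y & s].
  rewrite /cycle -cat1s -/(rcons _ _) rcons_path /= qr bq andbT /=.
  by apply: sub_path s_path => a c /and3P [].
have := @e_acyc [:: q, r, y & s] isT; rewrite cons_uniq q_notin s_uniq cyc.
by move/(_ isT).
Qed.

End Avoiding.

Section WeightedTree.
Variables (R : rcfType) (n : nat) (e : rel 'I_n) (w : 'I_n -> 'I_n -> R).
Hypotheses (e_sym : symmetric e) (e_conn : connected_graph e)
  (e_internal : exists v, ~~ pendant e v)
  (w_sym : forall i j, w i j = w j i) (w_pos : forall i j, e i j -> 0 < w i j).

Local Notation A := (wadj e w).
Local Notation nb := (pendant_nb e).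

Lemma wadj_sym : A^T = A.
Proof. by apply/matrixP => i j; rewrite !mxE e_sym w_sym. Qed.

Lemma wadj_ge0 i j : 0 <= A i j.
Proof. by rewrite mxE; case: ifP => // /w_pos/ltW. Qed.

Lemma wadj_subr_scalar_sym tau : (A - tau%:M)^T = A - tau%:M.
Proof. by rewrite linearB /= wadj_sym tr_scalar_mx. Qed.

Lemma nb_internal p : pendant e p -> ~~ pendant e (nb p).
Proof. exact: pendant_nb_internal. Qed.

Lemma w_nb_gt0 p : pendant e p -> 0 < w (nb p) p.
Proof. by move=> pp; rewrite w_sym; apply/w_pos/pendant_adj_nb. Qed.

Lemma mulmx_wadj_pendant (z : 'rV[R]_n) p :
  pendant e p -> (z *m A) 0 p = z 0 (nb p) * w (nb p) p.
Proof.
move=> pp; rewrite mxE (bigD1 (nb p)) //= mxE e_sym pendant_adj_nb //.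
by rewrite big1 ?addr0 // => i /negbTE i_nb; rewrite mxE e_sym pendant_adjE // i_nb mulr0.
Qed.

(* With this scale the pendant rows of the form of [A] at a tied vector contribute
   [(wadj_sum + 1) * T], T the sum of the [z_(nb p)^2]; the internal rows lose at
   most [wadj_sum * T]. *)
Definition wadj_sum := \sum_i \sum_j A i j.
Definition pendant_scale p := (wadj_sum + 1) / w (nb p) p.
Definition pendant_tie : 'M[R]_n := \matrix_(i, j)
  (if pendant e j then (i == j)%:R - pendant_scale j * (i == nb j)%:R else 0).

Lemma pendant_scale_ge0 p : pendant e p -> 0 <= pendant_scale p.
Proof.
move=> pp; rewrite divr_ge0 ?(ltW (w_nb_gt0 pp)) // addr_ge0 //.
by apply: sumr_ge0 => i _; apply: sumr_ge0 => j _; apply: wadj_ge0.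
Qed.

Lemma pendant_tieP (z : 'rV[R]_n) : z *m pendant_tie = 0 ->
  forall p, pendant e p -> z 0 p = pendant_scale p * z 0 (nb p).
Proof.
move=> /matrixP zT p pp; have /eqP := zT 0 p; rewrite !mxE.
under eq_bigr do rewrite mxE pp mulrBr mulrCA.
by rewrite sumrB -mulr_sumr !sum_mulr_delta subr_eq0 => /eqP.
Qed.

Section PendantTie.
Hypothesis e_quasi : forall v, ~~ pendant e v -> exists u, e v u && pendant e u.
Variable z : 'rV[R]_n.
Hypothesis z_tie : z *m pendant_tie = 0.

Let T := \sum_(p | pendant e p) z 0 (nb p) ^+ 2.

Let internal_sqr_le q : ~~ pendant e q -> z 0 q ^+ 2 <= T.
Proof.
move=> /e_quasi /(internal_pendant_nb e_sym) [p pp <-].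
by rewrite /T (bigD1 p) //= lerDl sumr_ge0 // => *; apply: sqr_ge0.
Qed.

Let T_ge0 : 0 <= T.
Proof. by apply: sumr_ge0 => *; apply: sqr_ge0. Qed.

Let T_gt0 : z != 0 -> 0 < T.
Proof.
case/rV0Pn => k zk; suff [q q_int zq] : exists2 q, ~~ pendant e q & z 0 q != 0.
  by apply: lt_le_trans (internal_sqr_le q_int); rewrite exprn_even_gt0.
have [kp|] := boolP (pendant e k); last by exists k.
exists (nb k); first exact: nb_internal.
by apply: contraNneq zk => zk0; rewrite pendant_tieP // zk0 mulr0.
Qed.

Let pendant_row p : pendant e p ->
  \sum_j z 0 p * A p j * z 0 j = (wadj_sum + 1) * z 0 (nb p) ^+ 2.
Proof.
move=> pp; rewrite (bigD1 (nb p)) //= big1 ?addr0 => [|j /negbTE j_nb]; last first.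
  by rewrite mxE pendant_adjE // j_nb mulr0 mul0r.
rewrite mxE pendant_adj_nb // pendant_tieP // /pendant_scale (w_sym p).
by have := w_nb_gt0 pp; move: (w (nb p) p) => c c_gt0; field; apply: lt0r_neq0.
Qed.

Let internal_term i j : ~~ pendant e i -> - (A i j * T) <= z 0 i * A i j * z 0 j.
Proof.
move=> i_int; have [jp|j_int] := boolP (pendant e j).
  have [eij|/negbTE nij] := boolP (e i j); last by rewrite mxE nij mulr0 !mul0r oppr0.
  rewrite (pendant_tieP z_tie jp) -(adj_pendant_nb e_sym jp eij).
  apply: (@le_trans _ _ 0); first by rewrite oppr_le0 mulr_ge0 ?wadj_ge0.
  have := pendant_scale_ge0 jp; have := wadj_ge0 i j.
  move: (z 0 i) (A i j) (pendant_scale j) => a b c b_ge0 c_ge0.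
  have -> : a * b * (c * a) = b * c * a ^+ 2 by ring.
  by rewrite mulr_ge0 ?sqr_ge0 // mulr_ge0.
have := internal_sqr_le i_int; have := internal_sqr_le j_int; have := wadj_ge0 i j.
move: (z 0 i) (z 0 j) (A i j) => a b c c_ge0 b2 a2.
have ab : - T <= a * b by have := sqr_ge0 (a + b); nra.
have -> : a * c * b = c * (a * b) by ring.
by rewrite -mulrN ler_wpM2l.
Qed.

Lemma form_pendant_tie_gt0 : z != 0 -> 0 < '[z, z]_A.
Proof.
move=> z_neq0; apply: lt_le_trans (T_gt0 z_neq0) _.
rewrite formE2 (bigID (fun i => pendant e i)) /= (eq_bigr _ pendant_row) -mulr_sumr.
have : - (wadj_sum * T) <= \sum_(i | ~~ pendant e i) \sum_j z 0 i * A i j * z 0 j.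
  apply: le_trans (ler_sum _ (fun i i_int => ler_sum _ (fun j _ => internal_term j i_int))).
  have -> : \sum_(i | ~~ pendant e i) \sum_j - (A i j * T) =
      - ((\sum_(i | ~~ pendant e i) \sum_j A i j) * T).
    by rewrite mulr_suml -sumrN; apply: eq_bigr => i _; rewrite mulr_suml -sumrN.
  rewrite lerN2 ler_wpM2r // /wadj_sum [leRHS](bigID (fun i => pendant e i)) /= lerDr.
  by apply: sumr_ge0 => i _; apply: sumr_ge0 => j _; apply: wadj_ge0.
rewrite -/T; lra.
Qed.

End PendantTie.

Lemma rank_kermx_pendant_tie :
  (n - #|[set p | pendant e p]| <= \rank (kermx pendant_tie))%N.
Proof. by apply: mxrank_kermx_supp => i j; rewrite inE mxE => /negbTE ->. Qed.

Definition eigen_at_pendants tau (z : 'rV[R]_n) :=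
  forall p, pendant e p -> (z *m (A - tau%:M)) 0 p = 0.

Lemma eigen_at_pendants_lin tau a u v : eigen_at_pendants tau u ->
  eigen_at_pendants tau v -> eigen_at_pendants tau (a *: u + v).
Proof.
move=> Wu Wv p pp; rewrite mulmxDl -scalemxAl [LHS]mxE [X in X + _]mxE.
by rewrite Wu // Wv // mulr0 addr0.
Qed.

Lemma form_internal0 (u : 'rV[R]_n) : (forall q, ~~ pendant e q -> u 0 q = 0) ->
  '[u, u]_A = 0.
Proof.
move=> u_int; rewrite formE big1 // => j _.
have [jp|/u_int ->] := boolP (pendant e j); last by rewrite mulr0.
by rewrite mulmx_wadj_pendant // u_int ?nb_internal // !mul0r.
Qed.

Lemma eigen_at_pendants_internal0 tau x : tau != 0 -> eigen_at_pendants tau x ->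
  (forall q, ~~ pendant e q -> x 0 q = 0) -> x = 0.
Proof.
move=> tau_neq0 xW x_int; apply/rowP => j; rewrite mxE.
have [jp|/x_int //] := boolP (pendant e j).
have := xW j jp; rewrite mulmx_subr_scalar_entry mulmx_wadj_pendant // x_int ?nb_internal //.
by rewrite mul0r sub0r => /eqP; rewrite oppr_eq0 mulf_eq0 (negbTE tau_neq0) => /eqP.
Qed.

Section ProportionalInternal.
Variables (tau : R) (x : 'rV[R]_n) (q0 : 'I_n).
Hypotheses (tau_gt0 : 0 < tau) (xW : eigen_at_pendants tau x)
  (x_neg : '[x, x]_(A - tau%:M) < 0) (q0_int : ~~ pendant e q0) (xq0 : x 0 q0 != 0).

Definition proportional_internal : 'M[R]_n := \matrix_(i, j)
  (if pendant e j then 0 else x 0 q0 * (i == j)%:R - x 0 j * (i == q0)%:R).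

Lemma proportional_internalP (z : 'rV[R]_n) : z *m proportional_internal = 0 ->
  forall j, ~~ pendant e j -> x 0 q0 * z 0 j = x 0 j * z 0 q0.
Proof.
move=> /matrixP zU j j_int; have /eqP := zU 0 j; rewrite !mxE.
under eq_bigr do rewrite mxE (negbTE j_int) mulrBr !(mulrCA (z 0 _)).
by rewrite sumrB -!mulr_sumr !sum_mulr_delta subr_eq0 => /eqP.
Qed.

Lemma rank_kermx_proportional_internal :
  (n - #|[set j | ~~ pendant e j] :\ q0| <= \rank (kermx proportional_internal))%N.
Proof.
apply: mxrank_kermx_supp => i j; rewrite !inE negb_and !negbK mxE => /orP [/eqP ->|-> //].
by rewrite (negbTE q0_int) subrr.
Qed.

Lemma form_proportional_internal_lt0 (z : 'rV[R]_n) :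
  z *m proportional_internal = 0 -> z != 0 -> '[z, z]_(A - tau%:M) < 0.
Proof.
move=> /proportional_internalP zU z_neq0; pose c := z 0 q0 / x 0 q0; pose u := z - c *: x.
have u_int j : ~~ pendant e j -> u 0 j = 0.
  by move=> /zU zxj; rewrite !mxE /c -[z 0 j](mulKf xq0) zxj; field.
have zE : z = u + c *: x by rewrite /u subrK.
have xu0 : '[x, u]_(A - tau%:M) = 0.
  rewrite formE big1 // => j _.
  by have [jp|/u_int ->] := boolP (pendant e j); [rewrite xW ?mul0r | rewrite mulr0].
have uu : '[u, u]_(A - tau%:M) = - (tau * '[u, u]).
  by rewrite form_subr_scalar form_internal0 // sub0r.
clearbody u c.
have -> : '[z, z]_(A - tau%:M) = - (tau * '[u, u]) + c ^+ 2 * '[x, x]_(A - tau%:M).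
  rewrite zE formDl !formDr !formZl !formZr /= (form_sym u x (wadj_subr_scalar_sym tau)).
  by rewrite xu0 uu; ring.
have [u0|u_neq0] := eqVneq u 0.
  have c_neq0 : c != 0 by apply: contra_neq z_neq0 => c0; rewrite zE u0 c0 scale0r addr0.
  by rewrite u0 form0l mulr0 oppr0 add0r pmulr_rlt0 // exprn_even_gt0.
have := form1_gt0 u_neq0; have := sqr_ge0 c; move: '[u, u] (c ^+ 2) => a b b_ge0 a_gt0.
have : b * '[x, x]_(A - tau%:M) <= 0 by rewrite mulr_ge0_le0 // ltW.
have : 0 < tau * a by rewrite mulr_gt0.
lra.
Qed.

End ProportionalInternal.

Lemma card_pendant_internal :
  (#|[set p | pendant e p]| + #|[set q | ~~ pendant e q]|)%N = n.
Proof.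
rewrite -[RHS](card_ord n) -(cardsC [set p | pendant e p]); congr (_ + _)%N.
by apply: eq_card => q; rewrite !inE.
Qed.

Section MinPositiveEigenvalue.
Hypothesis e_quasi : forall v, ~~ pendant e v -> exists u, e v u && pendant e u.

Lemma wadj_pos_eigenvalue : exists2 c, 0 < c & eigenvalue A c.
Proof.
have [v v_int] := e_internal.
have : kermx pendant_tie != 0.
  rewrite -mxrank_eq0 -lt0n; apply: leq_trans rank_kermx_pendant_tie.
  have : (0 < #|[set q | ~~ pendant e q]|)%N by apply/card_gt0P; exists v; rewrite inE.
  have := card_pendant_internal; lia.
case/rowV0Pn => z /sub_kermxP z_tie z_neq0.
exact: symmetric_pos_eigenvalue wadj_sym _ (form_pendant_tie_gt0 e_quasi z_tie z_neq0).
Qed.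

Variable tau : R.
Hypotheses (tau_gt0 : 0 < tau)
  (tau_min : forall c, 0 < c -> eigenvalue A c -> tau <= c).

Lemma form_ge0_eigen_at_pendants x : eigen_at_pendants tau x -> 0 <= '[x, x]_(A - tau%:M).
Proof.
move=> xW; rewrite leNgt; apply/negP => x_neg.
have [q0 q0_int xq0] : exists2 q0, ~~ pendant e q0 & x 0 q0 != 0.
  case: (pickP [pred q | ~~ pendant e q && (x 0 q != 0)]) => [q /andP [q_int xq]|x_int].
    by exists q.
  suff x0 : x = 0 by move: x_neg; rewrite x0 form0l ltxx.
  apply: (eigen_at_pendants_internal0 (lt0r_neq0 tau_gt0) xW) => q q_int.
  by apply/eqP; have := x_int q; rewrite /= q_int => /negbFE.
have U_neg z : (z <= kermx (proportional_internal x q0))%MS -> z != 0 ->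
    '[z, z]_(A - tau%:M) < 0.
  by move/sub_kermxP; apply: form_proportional_internal_lt0.
have V_pos z : (z <= kermx pendant_tie)%MS -> z != 0 -> 0 < '[z, z]_A.
  by move/sub_kermxP; apply: form_pendant_tie_gt0.
have := symmetric_rank_definite_le wadj_sym tau_min U_neg V_pos.
have := rank_kermx_proportional_internal x q0_int; have := rank_kermx_pendant_tie.
have := card_pendant_internal.
by rewrite (cardsD1 q0 [set q | ~~ pendant e q]) inE q0_int /=; lia.
Qed.

End MinPositiveEigenvalue.

Section NowhereZero.
Hypotheses (e_irr : irreflexive e) (e_acyc : acyclic_graph e).
Variable tau : R.
Hypotheses (tau_gt0 : 0 < tau)
  (psd : forall x, eigen_at_pendants tau x -> 0 <= '[x, x]_(A - tau%:M)).

Section Eigenvector.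
Variable x : 'rV[R]_n.
Hypothesis xA : x *m A = tau *: x.

Let xAE a : (x *m A) 0 a = tau * x 0 a.
Proof. by rewrite xA mxE. Qed.

Section BranchAt.
Variables u v : 'I_n.
Hypotheses (uv : e u v) (xu : x 0 u = 0) (u_int : ~~ pendant e u).

Let S := [set b | connect (avoiding e u) v b].
Let xS : 'rV[R]_n := \row_b (if b \in S then x 0 b else 0).
Let star : 'rV[R]_n :=
  \row_b (if b == u then 1 else if e u b && pendant e b then w u b / tau else 0).

Let S_neq_u b : b \in S -> b != u.
Proof.
by rewrite inE => /connect_avoiding_neq; apply; apply: contraTneq uv => ->; rewrite e_irr.
Qed.

Let S_adj a b : a \in S -> e a b -> b != u -> b \in S.
Proof.
move=> aS ab bu; move: (aS); rewrite !inE => /connect_trans; apply; apply: connect1.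
by rewrite /= ab bu S_neq_u.
Qed.

Let mulmx_branch a :
  (xS *m A) 0 a = if a \in S then tau * x 0 a else if a == u then x 0 v * w v u else 0.
Proof.
rewrite mxE; case: ifPn => [aS|aS].
  rewrite -xAE mxE; apply: eq_bigr => b _; rewrite !mxE.
  have [ba|_] := boolP (e b a); last by rewrite !mulr0.
  case: ifPn => // bS; have [->|bu] := eqVneq b u; first by rewrite xu.
  by case/negP: bS; apply: S_adj aS _ bu; rewrite e_sym.
case: ifPn => [/eqP ->|au].
  rewrite (bigD1 v) //= big1 ?addr0 => [|b bv]; first by rewrite !mxE inE connect0 e_sym uv.
  rewrite !mxE; case: ifPn => [bS|]; last by rewrite mul0r.
  case: ifPn => [bu|]; last by rewrite mulr0.
  rewrite inE in bS; have /eqP := branch_unique e_irr e_acyc uv bS bu.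
  by rewrite (negbTE bv).
rewrite big1 // => b _; rewrite !mxE; case: ifPn => [bS|]; last by rewrite mul0r.
by case: ifPn => [ba|_]; [case/negP: aS; apply: S_adj bS ba au | rewrite mulr0].
Qed.

Let branch_residual a :
  (xS *m (A - tau%:M)) 0 a = if a == u then x 0 v * w v u else 0.
Proof.
rewrite mulmx_subr_scalar_entry mulmx_branch mxE.
case: ifPn => [aS|_]; first by rewrite (negbTE (S_neq_u aS)) subrr.
by rewrite mulr0 subr0.
Qed.

Let xS_eigen_at_pendants : eigen_at_pendants tau xS.
Proof.
by move=> p pp; rewrite branch_residual; case: eqP => // pu; move: u_int; rewrite -pu pp.
Qed.

Let star_eigen_at_pendants : eigen_at_pendants tau star.
Proof.
move=> p pp; rewrite mulmx_subr_scalar_entry mulmx_wadj_pendant // !mxE.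
have -> : (p == u) = false by apply: contraNF u_int => /eqP <-.
rewrite (negbTE (nb_internal pp)) andbF; case: eqP => [nbu|nbu].
  have up : e u p by rewrite -nbu e_sym pendant_adj_nb.
  by rewrite up pp -nbu mul1r mulrC divfK ?subrr // lt0r_neq0.
have -> : e u p = false by apply/negP => up; apply/nbu/esym/adj_pendant_nb.
by rewrite mul0r mulr0 subrr.
Qed.

Lemma eigenvector_internal_adj_zero : x 0 v = 0.
Proof.
have xS0 : '[xS, xS]_(A - tau%:M) = 0.
  rewrite formE big1 // => a _.
  rewrite branch_residual; case: eqP => [->|]; last by rewrite mul0r.
  by rewrite mxE ifN ?mulr0 //; apply: contraTN isT => /S_neq_u; rewrite eqxx.
have := form_psd_isotropic (wadj_subr_scalar_sym tau) (@eigen_at_pendants_lin tau) psd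
  xS_eigen_at_pendants star_eigen_at_pendants xS0.
rewrite formE (bigD1 u) //= big1 ?addr0 => [|a /negbTE au]; last first.
  by rewrite branch_residual au mul0r.
rewrite branch_residual !mxE !eqxx mulr1 => /eqP; rewrite mulf_eq0 => /orP [/eqP //|].
by rewrite gt_eqF // w_pos // e_sym.
Qed.

End BranchAt.

Lemma eigenvector_adj_zero u v : e u v -> x 0 u = 0 -> x 0 v = 0.
Proof.
move=> uv xu; have [up|u_int] := boolP (pendant e u); last first.
  exact: (eigenvector_internal_adj_zero uv xu u_int).
have vE : v = nb u by apply: adj_pendant_nb; rewrite // e_sym.
have := xAE u; rewrite mulmx_wadj_pendant // xu mulr0 -vE => /eqP.
have vu : e v u by rewrite e_sym.
by rewrite mulf_eq0 (gt_eqF (w_pos vu)) orbF => /eqP.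
Qed.

Lemma eigenvector_nowhere_zero : x != 0 -> forall i, x 0 i != 0.
Proof.
move=> x_neq0 i; apply: contra x_neq0 => /eqP xi; apply/eqP/rowP => j; rewrite mxE.
have /connectP [s s_path ->] := e_conn i j.
elim: s i xi s_path => //= y s IHs i xi /andP [iy /IHs]; apply.
exact: eigenvector_adj_zero iy xi.
Qed.

End Eigenvector.

Lemma eigenspace_rank1 : eigenvalue A tau -> \rank (eigenspace A tau) = 1%N.
Proof.
move=> tau_eig; have [v _] := e_internal.
apply/eqP; rewrite eqn_leq lt0n mxrank_eq0 andbC; apply/andP; split; first exact: tau_eig.
apply: (@mxrank_le1_coord _ _ _ _ v) => z /eigenspaceP zA zv.
apply/eqP; apply: contraT => z_neq0.
by have := eigenvector_nowhere_zero zA z_neq0 v; rewrite zv eqxx.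
Qed.

End NowhereZero.

End WeightedTree.

Unset Implicit Arguments.

Theorem corollary3p11 (R : rcfType) (n : nat) (e : rel 'I_n)
    (w : 'I_n -> 'I_n -> R) :
  in_class_T e ->
  (forall i j, w i j = w j i) ->
  (forall i j, e i j -> 0 < w i j) ->
  let A := wadj e w in
  exists tau : R,
    [/\ 0 < tau, eigenvalue A tau,
        (forall mu : R, 0 < mu -> eigenvalue A mu -> tau <= mu),
        mup tau (char_poly A) = 1%N &
        exists v : 'rV[R]_n, v *m A = tau *: v /\ forall i, v 0 i != 0].
Proof.
move=> [[[e_sym e_irr] e_conn e_acyc] e_internal e_quasi] w_sym w_pos A.
have symA : A^T = A := wadj_sym e_sym w_sym.
have [tau [tau_gt0 tau_eig tau_min]] := symmetric_min_pos_eigenvalue symA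
  (wadj_pos_eigenvalue e_sym e_conn e_internal w_sym w_pos e_quasi).
have psd := form_ge0_eigen_at_pendants e_sym e_conn e_internal w_sym w_pos e_quasi
  tau_gt0 tau_min.
exists tau; split => //; first by rewrite symmetric_mup_char_poly // eigenspace_rank1.
have /eigenvalueP [x xA x_neq0] := tau_eig; exists x; split => //.
exact: (eigenvector_nowhere_zero e_sym e_conn e_internal w_sym w_pos e_irr e_acyc
  tau_gt0 psd xA).
Qed.
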